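(* Let $\alpha\in\mathbb{Q}(i)\setminus\mathbb{R}$ with $|\alpha|>1$, with minimal primitive polynomial $P_\alpha(X)=a_2X^2+a_1X+a_0$ ($a_0,a_1,a_2\in\mathbb{Z}$ coprime, $a_2>0$, $P_\alpha(\alpha)=0$), and $\mathcal{D}=\{0,\ldots,|a_0|-1\}$, $\Lambda_\alpha=\mathbb{Z}[\alpha]\cap\alpha^{-1}\mathbb{Z}[\alpha^{-1}]$. Let $r=(\tfrac{a_2}{a_0},\tfrac{a_1}{a_0})$ and $\tau_r:\mathbb{Z}^2\to\mathbb{Z}^2$, $(z_0,z_1)\mapsto\left(z_1,-\left\lfloor \tfrac{a_2}{a_0}z_0+\tfrac{a_1}{a_0}z_1\right\rfloor\right)$. Let $\mathcal{V}_0=\{\pm(1,0),\pm(0,1)\}$, $\mathcal{V}_{j+1}=\mathcal{V}_j\cup\tau_r(\mathcal{V}_j)\cup(-\tau_r(-\mathcal{V}_j))$ for $j\ge0$, and $\mathcal{V}_r=\bigcup_{j\ge0}\mathcal{V}_j$. Let $\iota_\alpha:\mathbb{Q}^2\to\mathbb{Q}(i)$, $(z_0,z_1)\mapsto \operatorname{sgn}(a_0)\big(z_0a_2+z_1(a_2\alpha+a_1)\big)$, and $\mathcal{V}_\alpha=\iota_\alpha(\mathcal{V}_r)$. Then $\alpha$ has the finiteness property in $\Lambda_\alpha$ if and only if every $N\in\mathcal{V}_\alpha$ has an integer $\alpha$-expansion.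
   Context: For $x\in\Lambda_\alpha$ there is a unique $d\in\mathcal{D}$ with $(x-d)/\alpha\in\Lambda_\alpha$, and $T_\alpha(x)=(x-d)/\alpha$. An element $N\in\Lambda_\alpha$ has an integer $\alpha$-expansion if the orbit $N, T_\alpha(N), T_\alpha^2(N),\ldots$ reaches $0$; $\alpha$ has the finiteness property in $\Lambda_\alpha$ if every $N\in\Lambda_\alpha$ has an integer $\alpha$-expansion. *)

(* Complex numbers are modelled in algC (algebraic complex
   numbers), which contains Q(i). *)
From HB Require Import structures.
From mathcomp Require Import all_boot all_order all_algebra all_field.
Set Implicit Arguments. Unset Strict Implicit. Unset Printing Implicit Defensive.
Import Order.TTheory GRing.Theory Num.Theory.
Local Open Scope ring_scope.

Definition in_Qi (x : algC) : Prop :=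
  exists p q : rat, x = ratr p + 'i * ratr q.

Definition in_Zpoly (beta x : algC) : Prop :=
  exists p : {poly int}, x = (map_poly (fun z : int => z%:~R : algC) p).[beta].

Definition in_Lambda (alpha x : algC) : Prop :=
  in_Zpoly alpha x /\ exists y : algC, in_Zpoly alpha^-1 y /\ x = alpha^-1 * y.

Definition in_digits (a0 : int) (d : nat) : Prop := (d < `|a0|)%N.

Definition T_step (alpha : algC) (a0 : int) (x y : algC) : Prop :=
  in_Lambda alpha x /\
  exists d : nat,
    [/\ in_digits a0 d,
        in_Lambda alpha ((x - d%:R) / alpha),
        (forall d' : nat, in_digits a0 d' ->
           in_Lambda alpha ((x - d'%:R) / alpha) -> d' = d)
      & y = (x - d%:R) / alpha].

Definition has_int_expansion (alpha : algC) (a0 : int) (N : algC) : Prop :=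
  in_Lambda alpha N /\
  exists (n : nat) (s : nat -> algC),
    [/\ s 0%N = N,
        (forall k : nat, (k < n)%N -> T_step alpha a0 (s k) (s k.+1))
      & s n = 0].

Definition finiteness_property (alpha : algC) (a0 : int) : Prop :=
  forall N : algC, in_Lambda alpha N -> has_int_expansion alpha a0 N.

Definition tau_r (a0 a1 a2 : int) (z : int * int) : int * int :=
  (z.2, - Num.floor ((a2%:~R / a0%:~R : rat) * z.1%:~R
                     + (a1%:~R / a0%:~R : rat) * z.2%:~R)).

Definition negz2 (z : int * int) : int * int := (- z.1, - z.2).

Fixpoint in_Vj (a0 a1 a2 : int) (j : nat) (v : int * int) : Prop :=
  match j with
  | 0%N => v = (1, 0) \/ v = (-1, 0) \/ v = (0, 1) \/ v = (0, -1)
  | j'.+1 => [\/ in_Vj a0 a1 a2 j' v,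
                 (exists w, in_Vj a0 a1 a2 j' w /\ v = tau_r a0 a1 a2 w)
               | (exists w, in_Vj a0 a1 a2 j' w /\
                            v = negz2 (tau_r a0 a1 a2 (negz2 w)))]
  end.

Definition in_Vr (a0 a1 a2 : int) (v : int * int) : Prop :=
  exists j : nat, in_Vj a0 a1 a2 j v.

Definition iota_alpha (alpha : algC) (a0 a1 a2 : int) (z : int * int) : algC :=
  (Num.sg a0)%:~R * (z.1%:~R * a2%:~R + z.2%:~R * (a2%:~R * alpha + a1%:~R)).

From HB Require Import structures.
From mathcomp Require Import all_boot all_order all_algebra all_field.
From mathcomp Require Import ring lra zify.
Import Order.TTheory GRing.Theory Num.Theory.
Local Open Scope ring_scope.

(* The map iota is a bijection from Z^2 onto Lambda_alpha which conjugates
   tau_r to T_alpha: iota z - d = alpha * iota (tau_r z) for a digit d, and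
   this digit is unique because an integer of the form alpha * iota w is a
   multiple of a0.  So iota z has an integer expansion iff the tau_r-orbit of
   z reaches 0.  Since floor (x + y) is floor x + floor y or floor x + ceil y,
   tau_r (z + v) is tau_r z + tau_r v or tau_r z - tau_r (- v), and V_r is
   closed under both maps; by induction on the time the orbit of z needs to
   reach 0, so does the orbit of z + v for v in V_r, as soon as all orbits
   starting in V_r reach 0.  As V_r contains the unit vectors and their
   opposites, every orbit then reaches 0.  The inclusion of Lambda_alpha in
   the image of iota comes from Gauss's lemma: the primitive polynomial
   P_alpha divides X^k p - R whenever p(alpha) = x and R(alpha) = alpha^k x
   with deg R < k, and the top coefficients of the cofactor express x. *)

Lemma floorD_cases (R : archiRealFieldType) (x y : R) :
  Num.floor (x + y) = Num.floor x + Num.floor y \/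
  Num.floor (x + y) = Num.floor x - Num.floor (- y).
Proof.
rewrite (floorNceil (- y)) !opprK ceil_floor.
have [y_int | y_nint] := boolP (y \is a Num.int); first by left; rewrite floorDrz.
have /andP[x_ge x_lt] := floor_itv x; have /andP[y_ge y_lt] := floor_itv y.
rewrite !intrD mulr1z in x_lt y_lt.
have [lt | ge] := ltP (x + y) ((Num.floor x)%:~R + (Num.floor y)%:~R + 1).
  by left; apply: floor_def; rewrite !intrD mulr1z lt andbT; lra.
by right; rewrite /= addrA; apply: floor_def; rewrite !intrD mulr1z ge /=; lra.
Qed.

Lemma floor_div_rem (R : archiRealFieldType) (n m : int) : m != 0 ->
  0 <= Num.sg m * (n - m * Num.floor (n%:~R / m%:~R : R)) < `|m|.
Proof.
move=> m_neq0; set f := Num.floor _.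
have /andP[f_le f_lt] := floor_itv (n%:~R / m%:~R : R); rewrite -/f intrD in f_lt.
have e : ((Num.sg m * (n - m * f))%:~R : R) = `|m|%:~R * (n%:~R / m%:~R - f%:~R).
  by rewrite normrEsg !intrM intrB intrM; field; rewrite intr_eq0.
have m_gt0 : (0 : R) < `|m|%:~R by rewrite ltr0z normr_gt0.
rewrite -(ler0z R) -(ltr_int R) e; apply/andP; split; nra.
Qed.

Lemma pairMzE (M1 M2 : zmodType) (x : M1 * M2) (c : int) :
  x *~ c = (x.1 *~ c, x.2 *~ c).
Proof. by case: c => n; rewrite ?NegzE ?mulrNz -!pmulrn pairMnE. Qed.

Section ShiftRadixOrbits.
Variables a0 a1 a2 : int.
Local Notation tau := (tau_r a0 a1 a2).
Local Notation Vr := (in_Vr a0 a1 a2).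

Lemma tau_rD x y : tau (x + y) = tau x + tau y \/ tau (x + y) = tau x - tau (- y).
Proof.
case: x y => [x1 x2] [y1 y2]; rewrite /tau_r /=.
set c2 := (a2%:~R / a0%:~R : rat); set c1 := (a1%:~R / a0%:~R : rat).
set A := c2 * x1%:~R + c1 * x2%:~R; set B := c2 * y1%:~R + c1 * y2%:~R.
have -> : c2 * (x1 + y1)%:~R + c1 * (x2 + y2)%:~R = A + B by rewrite !intrD /A /B; ring.
have -> : c2 * (- y1)%:~R + c1 * (- y2)%:~R = - B by rewrite !intrN /B; ring.
by case: (floorD_cases _ A B) => ->; [left | right]; apply: (congr2 pair) => /=; ring.
Qed.

Lemma in_Vr_tau v : Vr v -> Vr (tau v).
Proof. by case=> j hj; exists j.+1; apply: Or32; exists v. Qed.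

Lemma in_Vr_tauN v : Vr v -> Vr (- tau (- v)).
Proof. by case=> j hj; exists j.+1; apply: Or33; exists v. Qed.

Definition reaches0 z := exists n, iter n tau z = 0.

Lemma reaches0_tau z : reaches0 (tau z) -> reaches0 z.
Proof. by case=> n hn; exists n.+1; rewrite iterSr. Qed.

Section AllOrbits.
Hypothesis Vr_reaches0 : forall v, Vr v -> reaches0 v.

Lemma reaches0_addVr z v : reaches0 z -> Vr v -> reaches0 (z + v).
Proof.
case=> n; elim: n z v => [|n IH] z v hz hv.
  by move: hz => /= ->; rewrite add0r; exact: Vr_reaches0.
rewrite iterSr in hz; apply: reaches0_tau.
by case: (tau_rD z v) => ->; apply: IH hz _; [exact: in_Vr_tau | exact: in_Vr_tauN].
Qed.

Lemma reaches0_addMz z v c : reaches0 z -> Vr v -> Vr (- v) -> reaches0 (z + v *~ c).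
Proof.
move=> hz hv hNv.
have addMn w n : Vr w -> reaches0 (z + w *+ n).
  move=> hw; elim: n => [|n IH]; first by rewrite mulr0n addr0.
  by rewrite mulrSr addrA; exact: reaches0_addVr.
by case: c => n; [exact: addMn | rewrite NegzE mulrNz -mulNrn; exact: addMn].
Qed.

Lemma reaches0_all z : reaches0 z.
Proof.
have -> : z = 0 + (1, 0) *~ z.1 + (0, 1) *~ z.2.
  rewrite !pairMzE /= !mul0rz !intz; case: z => z1 z2 /=.
  by apply: (congr2 pair) => /=; rewrite ?add0r ?addr0.
have Vr_base v : in_Vj a0 a1 a2 0 v -> Vr v by exists 0%N.
have [e1 e1N] : Vr (1, 0) /\ Vr (- (1, 0)) by split; apply: Vr_base; do ?[by left | right].
have [e2 e2N] : Vr (0, 1) /\ Vr (- (0, 1)) by split; apply: Vr_base; do ?[by left | right].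
by apply: reaches0_addMz e2 e2N; apply: reaches0_addMz e1 e1N; exists 0%N.
Qed.

End AllOrbits.
End ShiftRadixOrbits.

Lemma nonreal_intr_indep {R : numFieldType} {x : R} {u v : int} :
  x \notin Num.real -> u%:~R + v%:~R * x = 0 -> u = 0 /\ v = 0.
Proof.
move=> x_nreal e; suff v0 : v = 0.
  by split=> //; move/eqP: e; rewrite v0 mul0r addr0 intr_eq0 => /eqP.
apply/eqP; apply: contraNT x_nreal => v_neq0.
have v_neq0' : (v%:~R : R) != 0 by rewrite intr_eq0.
have -> : x = - u%:~R / v%:~R.
  by apply: (mulIf v_neq0'); rewrite divfK // mulrC; apply/eqP; rewrite -addr_eq0 addrC e.
by rewrite rpredM ?rpredN ?rpredV ?rpred_int.
Qed.

Definition zeval {R : comNzRingType} (x : R) : {poly int} -> R :=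
  horner_eval x \o map_poly intr.

Section ZevalMorphism.
Variables (R : comNzRingType) (x : R).
HB.instance Definition _ :=
  GRing.RMorphism.copy (zeval x) (horner_eval x \o map_poly intr).

Lemma zevalC c : zeval x c%:P = c%:~R.
Proof. by rewrite /zeval /= horner_evalE map_polyC hornerC. Qed.

Lemma zevalX : zeval x 'X = x.
Proof. by rewrite /zeval /= horner_evalE map_polyX hornerX. Qed.
End ZevalMorphism.

Lemma size_map_intr (C : numDomainType) (p : {poly int}) :
  size (map_poly intr p : {poly C}) = size p.
Proof. by rewrite size_map_inj_poly //; exact: intr_inj. Qed.

Lemma in_ZpolyP beta x : in_Zpoly beta x <-> exists p, x = zeval beta p.
Proof. by []. Qed.

Lemma zeval_rev (C : numFieldType) (x : C) (q : {poly int}) n :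
  x != 0 -> (size q <= n.+1)%N ->
  zeval x (\poly_(i < n.+1) q`_(n - i)) = x ^+ n * zeval x^-1 q.
Proof.
move=> x_neq0 size_q.
rewrite /zeval /= !horner_evalE !(horner_coef_wide (n := n.+1)) ?size_map_intr ?size_poly //.
rewrite mulr_sumr [RHS](reindex_inj rev_ord_inj) /=; apply: eq_bigr => i _.
rewrite !coef_map_id0 // coef_poly ltn_ord subSS exprVn.
have -> : x ^+ n = x ^+ (n - i) * x ^+ i by rewrite -exprD subnK // -ltnS.
by field; rewrite expf_neq0.
Qed.

Lemma conjC_zeval (C : numClosedFieldType) (x : C) p : (zeval x p)^* = zeval x^* p.
Proof.
rewrite /zeval /= -horner_map -map_poly_comp; congr _.[_].
by apply: eq_map_poly => c /=; rewrite rmorph_int.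
Qed.

Lemma dvdp_nonreal_roots {C : numClosedFieldType} {x : C} {P F : {poly C}} :
  x \notin Num.real -> (size P <= 3)%N -> P != 0 ->
  root P x -> root P x^* -> root F x -> root F x^* -> P %| F.
Proof.
move=> x_nreal size_P P_neq0 Px Pxc Fx Fxc.
set Q := ('X - x%:P) * ('X - x^*%:P).
have dvdQ G : root G x -> root G x^* -> Q %| G.
  by move=> Gx Gxc; rewrite Gauss_dvdp ?coprimep_XsubC2 ?subr_eq0 -?CrealE // !dvdp_XsubCl Gx.
have size_Q : size Q = 3 by rewrite size_mul ?polyXsubC_eq0 // !size_XsubC.
have /eqp_dvdl <- : Q %= P.
  rewrite -dvdp_size_eqp ?dvdQ // eqn_leq size_Q size_P.
  by rewrite -size_Q dvdp_leq ?dvdQ.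
exact: dvdQ.
Qed.

Lemma dvdp_int_nonreal_root {C : numClosedFieldType} {x : C} {P F : {poly int}} :
  x \notin Num.real -> (size P <= 3)%N -> P != 0 ->
  zeval x P = 0 -> zeval x F = 0 -> P %| F.
Proof.
move=> x_nreal size_P P_neq0 Px Fx.
rewrite -dvdp_rat_int -(dvdp_map (ratr : {rmorphism rat -> C})) -!map_poly_comp.
rewrite !(eq_map_poly (fun z => ratr_int C z)).
have rootE G y : root (map_poly intr G) y = (zeval y G == 0) by [].
apply: (dvdp_nonreal_roots x_nreal); rewrite ?size_map_intr ?rootE -?conjC_zeval ?Px ?Fx ?conjC0 //.
by rewrite -size_poly_eq0 size_map_intr size_poly_eq0.
Qed.

Lemma dvdp_primitive (P F : {poly int}) :
  (zcontents P %| 1)%Z -> P %| F -> exists G, F = P * G.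
Proof.
rewrite dvdz1 => /eqP abs_c /dvdpP_int[G ->].
set c := zcontents P; have c2 : c * c = 1 by lia.
exists (c *: G).
by rewrite {2}[P]zpolyEprim -/c -scalerAr scalerAl scalerA c2 scale1r.
Qed.

Section QuadraticPolynomial.
Variables a0 a1 a2 : int.

Definition quad_poly : {poly int} := a0%:P + a1%:P * 'X + a2%:P * 'X^2.

Lemma coef_quad_poly i : quad_poly`_i = [:: a0; a1; a2]`_i.
Proof.
rewrite /quad_poly !coefD coefC !coefCM coefX coefXn.
by case: i => [|[|[|i]]]; rewrite /= ?mulr0 ?mulr1 ?addr0 ?add0r ?nth_nil.
Qed.

Lemma size_quad_poly : (size quad_poly <= 3)%N.
Proof. by apply/leq_sizeP => i le3i; rewrite coef_quad_poly nth_default. Qed.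

Lemma quad_poly_neq0 : a2 != 0 -> quad_poly != 0.
Proof.
move=> a2_neq0; apply: contraNneq a2_neq0 => P0.
by have := coef_quad_poly 2; rewrite P0 coef0 /= => <-.
Qed.

Lemma zeval_quad_poly (R : comNzRingType) (x : R) :
  zeval x quad_poly = a2%:~R * x ^+ 2 + a1%:~R * x + a0%:~R.
Proof. by rewrite !rmorphD !rmorphM /= !zevalC zevalX; ring. Qed.

Lemma zcontents_quad_poly : gcdz (gcdz a0 a1) a2 = 1 -> (zcontents quad_poly %| 1)%Z.
Proof.
move=> coprime_a; suff : (zcontents quad_poly %| gcdz (gcdz a0 a1) a2)%Z by rewrite coprime_a.
have /polyOverP c_dvd : quad_poly \is a polyOver (dvdz (zcontents quad_poly)).
  by rewrite -dvdz_contents.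
rewrite !dvdz_gcd; have := c_dvd 0%N; have := c_dvd 1%N; have := c_dvd 2%N.
by rewrite !coef_quad_poly => -> -> ->.
Qed.

(* Split the cofactor at degree k.+1: its low part only affects coefficients of
   degree at most k.+2, where it is absorbed by R, so that 'X * p minus the high
   part times quad_poly is a polynomial of degree at most 1. *)
Lemma quad_poly_mulXn_split k (p R G : {poly int}) :
  (size R <= k.+2)%N -> 'X^(k.+2) * p - R = quad_poly * G ->
  'X * p = quad_poly * drop_poly k.+1 G + (- a0 * G`_k.+1)%:P + (a2 * G`_k)%:P * 'X.
Proof.
move=> size_R eG; set P := quad_poly.
set Glo := take_poly k.+1 G; set Ghi := drop_poly k.+1 G.
set T := 'X * p - P * Ghi.
have eT : 'X^(k.+1) * T = R + P * Glo.
  have eG' := poly_take_drop k.+1 G; rewrite -/Glo -/Ghi in eG'.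
  apply/eqP; rewrite -subr_eq0; apply/eqP.
  transitivity (('X^(k.+2) * p - R) - P * G); last by rewrite eG subrr.
  by rewrite -eG' /T !exprS; ring.
have coefPGlo i : (P * Glo)`_i.+2 = a0 * Glo`_i.+2 + a1 * Glo`_i.+1 + a2 * Glo`_i.
  by rewrite /P /quad_poly !mulrDl -!mulrA !coefD !coefCM !coefXM.
have coefT j : T`_j.+1 = (R + P * Glo)`_(j + k).+2.
  rewrite -eT coefXnM ifF; last by lia.
  by congr _`__; lia.
have eT0 : T = (- a0 * G`_k.+1)%:P + (a2 * G`_k)%:P * 'X.
  apply/polyP => -[|j].
    by rewrite coefB coefXM coef0M coef_quad_poly coef_drop_poly coefD coefC coefMX /= add0n; ring.
  rewrite coefT coefD (nth_default _ (leq_trans size_R _)) ?ltnS ?leq_addl // coefPGlo.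
  rewrite !coef_take_poly coefD coefC coefMX /=.
  by case: j => [|j]; rewrite ?add0n ?ltnSn /= !ifF ?coefC /=; try lia; ring.
by rewrite -addrA -eT0 /T addrC subrK.
Qed.

End QuadraticPolynomial.

Section RadixRepresentation.
Context {alpha : algC} {a0 a1 a2 : int}.
Hypothesis alpha_nreal : alpha \notin Num.real.
Hypothesis a2_neq0 : a2 != 0.
Hypothesis coprime_a : gcdz (gcdz a0 a1) a2 = 1.
Hypothesis alpha_root : a2%:~R * alpha ^+ 2 + a1%:~R * alpha + a0%:~R = 0.

Local Notation iota := (iota_alpha alpha a0 a1 a2).
Local Notation tau := (tau_r a0 a1 a2).
Local Notation Lambda := (in_Lambda alpha).

Lemma alpha_neq0 : alpha != 0.
Proof. by apply: contraNneq alpha_nreal => ->; rewrite real0. Qed.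

Lemma a0_alpha : a0%:~R = - (alpha * (a2%:~R * alpha + a1%:~R)).
Proof. by apply/eqP; rewrite -addr_eq0 -alpha_root; apply/eqP; ring. Qed.

Lemma a0_neq0 : a0 != 0.
Proof.
apply/eqP => a0_0; move/eqP: a0_alpha; rewrite a0_0 eq_sym oppr_eq0 mulf_eq0.
rewrite (negPf alpha_neq0) addrC /= => /eqP /(nonreal_intr_indep alpha_nreal)[_ a2_0].
by move: a2_neq0; rewrite a2_0.
Qed.

Lemma iota0 : iota 0 = 0.
Proof. by rewrite /iota_alpha /= !mul0r add0r mulr0. Qed.

Lemma iotaB z w : iota (z - w) = iota z - iota w.
Proof. by case: z w => [z1 z2] [w1 w2]; rewrite /iota_alpha /= !intrB; ring. Qed.

Lemma iota_eq0 z : iota z = 0 -> z = 0.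
Proof.
case: z => z1 z2; rewrite /iota_alpha /= => /eqP.
rewrite mulf_eq0 intr_eq0 sgr_eq0 (negPf a0_neq0) /= => /eqP e.
have [] := nonreal_intr_indep (u := z1 * a2 + z2 * a1) (v := z2 * a2) alpha_nreal.
  by rewrite -e !intrD !intrM; ring.
move=> e1 /eqP; rewrite mulf_eq0 (negPf a2_neq0) orbF => /eqP z2_0.
move: e1; rewrite z2_0 mul0r addr0 => /eqP.
by rewrite mulf_eq0 (negPf a2_neq0) orbF => /eqP ->.
Qed.

Lemma alpha_iota w :
  alpha * iota w = (- `|a0| * w.2)%:~R + (Num.sg a0 * a2 * w.1)%:~R * alpha.
Proof. by rewrite /iota_alpha normrEsg !(intrM, intrN) a0_alpha; ring. Qed.

Lemma iota_sgM z :
  iota (Num.sg a0 * z.1, Num.sg a0 * z.2) =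
  z.1%:~R * a2%:~R + z.2%:~R * (a2%:~R * alpha + a1%:~R).
Proof.
have sg2 : (Num.sg a0)%:~R * (Num.sg a0)%:~R = 1 :> algC.
  by rewrite -intrM -expr2 sqr_sg a0_neq0.
rewrite /iota_alpha /= !intrM; set s := (Num.sg a0)%:~R.
transitivity (s * s * (z.1%:~R * a2%:~R + z.2%:~R * (a2%:~R * alpha + a1%:~R))); first ring.
by rewrite sg2 mul1r.
Qed.

Lemma iota_in_Lambda z : Lambda (iota z).
Proof.
case: z => z1 z2; split.
  apply/in_ZpolyP.
  exists ((Num.sg a0 * (z1 * a2 + z2 * a1))%:P + (Num.sg a0 * z2 * a2)%:P * 'X).
  by rewrite !rmorphD !rmorphM /= !zevalC zevalX /iota_alpha /= !(intrM, intrD); ring.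
exists (alpha * iota (z1, z2)); split; last by rewrite mulKf ?alpha_neq0.
apply/in_ZpolyP.
exists ((Num.sg a0 * (- z1 * a1 - z2 * a0))%:P + (Num.sg a0 * (- z1 * a0))%:P * 'X).
rewrite !rmorphD !rmorphM /= !zevalC zevalX alpha_iota /= normrEsg.
rewrite !(intrM, intrD, intrN) a0_alpha.
by field; exact: alpha_neq0.
Qed.

Lemma in_Lambda_iota x : Lambda x -> exists z, x = iota z.
Proof.
case=> /in_ZpolyP[p ->] [_ [/in_ZpolyP[q ->] ex]].
set k := size q; set R := \poly_(i < k.+2) q`_(k.+1 - i).
have eR : zeval alpha R = alpha ^+ k.+2 * zeval alpha p.
  by rewrite zeval_rev ?alpha_neq0 ?leqW // ex mulrA [alpha ^+ k.+2]exprSr mulfK ?alpha_neq0.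
have [G eG] : exists G, 'X^(k.+2) * p - R = quad_poly a0 a1 a2 * G.
  apply: dvdp_primitive; first exact: zcontents_quad_poly.
  apply: (dvdp_int_nonreal_root alpha_nreal).
  - exact: size_quad_poly.
  - exact: quad_poly_neq0.
  - by rewrite zeval_quad_poly.
  - by rewrite rmorphB rmorphM rmorphXn /= zevalX eR subrr.
move/(congr1 (zeval alpha)): (@quad_poly_mulXn_split a0 a1 a2 k p R G (size_poly _ _) eG).
rewrite !rmorphD !rmorphM /= zeval_quad_poly alpha_root mul0r add0r !zevalC zevalX => e.
exists (Num.sg a0 * G`_k, Num.sg a0 * G`_k.+1); rewrite (iota_sgM (G`_k, G`_k.+1)) /=.
by apply: (mulfI alpha_neq0); rewrite e intrN a0_alpha; ring.
Qed.

Lemma iota_tau z : exists2 d : nat, (d < `|a0|)%N & iota z - d%:R = alpha * iota (tau z).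
Proof.
case: z => z1 z2; set n := z1 * a2 + z2 * a1.
have eQ : (a2%:~R / a0%:~R : rat) * z1%:~R + (a1%:~R / a0%:~R) * z2%:~R = n%:~R / a0%:~R.
  by rewrite /n intrD !intrM; field; rewrite intr_eq0 a0_neq0.
have /andP[D_ge0 D_lt] := floor_div_rem rat n a0 a0_neq0.
set D := Num.sg a0 * _ in D_ge0 D_lt; exists `|D|%N; first lia.
rewrite pmulrn abszE ger0_norm // /tau_r /= eQ alpha_iota /= /iota_alpha /n /=.
by rewrite normrEsg !(intrM, intrD, intrB, intrN); ring.
Qed.

Lemma intr_eq_alpha_iota (n : int) w : n%:~R = alpha * iota w -> n = - `|a0| * w.2.
Proof.
rewrite alpha_iota => /eqP; rewrite -subr_eq0 opprD addrA -mulNr -!intrN -intrD => /eqP.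
by case/nonreal_intr_indep => // /eqP; rewrite subr_eq0 => /eqP.
Qed.

Lemma Lambda_digit_unique {x : algC} {d d' : nat} : in_digits a0 d -> in_digits a0 d' ->
  Lambda ((x - d%:R) / alpha) -> Lambda ((x - d'%:R) / alpha) -> d = d'.
Proof.
move=> d_lt d'_lt /in_Lambda_iota[w ew] /in_Lambda_iota[w' ew'].
have /intr_eq_alpha_iota : (d'%:Z - d%:Z)%:~R = alpha * iota (w - w').
  by rewrite iotaB -ew -ew' intrB -!pmulrn; field; exact: alpha_neq0.
rewrite /in_digits in d_lt d'_lt.
move: (w - w').2 => k e.
by case: (ltrgtP k 0) => k_cmp; nia.
Qed.

Lemma T_step_iota z y : T_step alpha a0 (iota z) y <-> y = iota (tau z).
Proof.
have [d d_lt ed] := iota_tau z.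
have e_tau : (iota z - d%:R) / alpha = iota (tau z) by rewrite ed mulrC mulKf ?alpha_neq0.
have L_tau : Lambda ((iota z - d%:R) / alpha) by rewrite e_tau; exact: iota_in_Lambda.
split=> [[_ [d' [d'_lt L' _ ->]]] | ->].
  by rewrite -(Lambda_digit_unique d_lt d'_lt L_tau L').
split; first exact: iota_in_Lambda.
exists d; split=> // d' d'_lt L'.
exact: Lambda_digit_unique d'_lt d_lt L' L_tau.
Qed.

Lemma has_int_expansion_iota z :
  has_int_expansion alpha a0 (iota z) <-> reaches0 a0 a1 a2 z.
Proof.
split=> [[_ [n [s [s0 s_step sn]]]] | [n tau_n]].
  have s_iter k : (k <= n)%N -> s k = iota (iter k tau z).
    elim: k => [|k IH] lt_kn; first by rewrite s0.
    by move: (s_step k lt_kn); rewrite (IH (ltnW lt_kn)) => /T_step_iota.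
  by exists n; apply: iota_eq0; rewrite -s_iter.
split; first exact: iota_in_Lambda.
exists n, (fun k => iota (iter k tau z)); split=> // [k _|].
  exact/T_step_iota.
by rewrite /= tau_n iota0.
Qed.

End RadixRepresentation.

Theorem mainTheorem5 (alpha : algC) (a0 a1 a2 : int) :
  in_Qi alpha -> alpha \notin Num.real -> 1 < `|alpha| ->
  0 < a2 -> gcdz (gcdz a0 a1) a2 = 1 ->
  a2%:~R * alpha ^+ 2 + a1%:~R * alpha + a0%:~R = 0 ->
  (finiteness_property alpha a0 <->
   forall v : int * int, in_Vr a0 a1 a2 v ->
     has_int_expansion alpha a0 (iota_alpha alpha a0 a1 a2 v)).
Proof.
move=> _ alpha_nreal _ a2_gt0 coprime_a alpha_root.
have a2_neq0 : a2 != 0 by rewrite gt_eqF.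
have expansionE := has_int_expansion_iota alpha_nreal a2_neq0 coprime_a alpha_root.
split=> [finite v _ | Vr_expansion N].
  exact/finite/iota_in_Lambda.
case/(in_Lambda_iota alpha_nreal a2_neq0 coprime_a alpha_root) => z ->.
by apply/expansionE/reaches0_all => v /Vr_expansion/expansionE.
Qed.
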